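(* Let $q$ be a prime power, $k=\mathbb{F}_q(T)$, $N\in\mathbb{F}_q[T]\setminus\{0\}$, and let $L_1,L_2$ be subfields of the cyclotomic function field $k(\Lambda_N)$ containing $k$. Put $L:=L_1L_2$, $L^+:=L\cap k(\Lambda_N)^+$ and $L_i^+:=L_i\cap k(\Lambda_N)^+$ for $i=1,2$. Then $[L^+:L_1^+L_2^+]$ divides $q-1$.
   Context: $k(\Lambda_N)$ is the $N$-th cyclotomic function field, generated over $k$ by the $N$-torsion of the Carlitz module; its Galois group over $k$ is $(\mathbb{F}_q[T]/(N))^*$, which contains $\mathbb{F}_q^*$ as a subgroup. $k(\Lambda_N)^+$ denotes the fixed field of $\mathbb{F}_q^*$ (the maximal real subfield). *)

From HB Require Import structures.
From mathcomp Require Import all_boot all_order all_algebra all_field.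
From mathcomp Require Import fraction boolp.
Set Implicit Arguments. Unset Strict Implicit. Unset Printing Implicit Defensive.
Import GRing.Theory.
Local Open Scope ring_scope.

(* k = F_q(T), the fraction field of F_q[T], for a finite field F (q = #|F|). *)
Definition kfield (F : finFieldType) := {fraction {poly F}}.

Definition kT (F : finFieldType) : kfield F := @FracField.tofrac _ ('X : {poly F}).

Definition kofpoly (F : finFieldType) (a : {poly F}) : kfield F := @FracField.tofrac _ a.

Definition kofF (F : finFieldType) (a : F) : kfield F := kofpoly (a%:P).

Definition carlitzT (F : finFieldType) : {poly kfield F} :=
  (kT F)%:P * 'X + 'X^#|F|.

Definition carlitz_pow (F : finFieldType) (i : nat) : {poly kfield F} :=
  iter i (fun p => carlitzT F \Po p) 'X.

Definition carlitz (F : finFieldType) (N : {poly F}) : {poly kfield F} :=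
  \sum_(i < size N) kofF N`_i *: carlitz_pow F i.

(* E is (a model of) the cyclotomic function field k(Lambda_N): the splitting
   field over k of C_N, i.e. the field generated over k by the N-torsion. *)
Definition is_cyclotomic_field (F : finFieldType) (N : {poly F})
    (E : splittingFieldType (kfield F)) : Prop :=
  splittingFieldFor 1%AS (map_poly (in_alg E) (carlitz N)) fullv.

(* The subgroup F_q^* of Gal(k(Lambda_N)/k) = (F_q[T]/N)^*: the automorphisms
   acting on Lambda_N as lambda |-> C_a(lambda) = a lambda for some a in F_q^*. *)
Definition constant_subgroup (F : finFieldType) (N : {poly F})
    (E : splittingFieldType (kfield F)) : {set gal_of (fullv : {vspace E})} :=
  [set g : gal_of (fullv : {vspace E}) |
    `[< exists a : F, a != 0 /\
        forall x : E, root (map_poly (in_alg E) (carlitz N)) x ->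
          (g : 'AEnd(E)) x = (kofF a)%:A * x >]].

Definition real_subfield (F : finFieldType) (N : {poly F})
    (E : splittingFieldType (kfield F)) : {subfield E} :=
  fixedField_aspace (constant_subgroup N E).

From HB Require Import structures.
From mathcomp Require Import all_boot all_order all_algebra all_field.
From mathcomp Require Import all_fingroup all_solvable fraction boolp.
Set Implicit Arguments. Unset Strict Implicit. Unset Printing Implicit Defensive.
Import GRing.Theory FinRing.Theory.

(* By Galois theory in G = Gal(k(Lambda_N)/k), with H_i = Gal(/L_i) and
   S = Gal(/k(Lambda_N)^+), the fields L^+ and L_1^+ L_2^+ correspond to
   (H_1 :&: H_2) S and H_1 S :&: H_2 S, so the degree in question is the index
   of the former in the latter.  S is central (it acts on the torsion by
   scalars), which makes this index divide |S| by the modular law, and |S|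
   divides q - 1 because S is the image of a subgroup of F_q^*.  The extension
   is Galois because C_N is separable: its derivative is the constant N. *)

Section CentralJoin.
Local Open Scope group_scope.
Variables (gT : finGroupType) (A B H : {group gT}).
Hypotheses (cAH : H \subset 'C(A)) (cBH : H \subset 'C(B)).

Lemma indexg_joinI_central_dvd :
  (#|(A <*> H) :&: (B <*> H) : (A :&: B) <*> H| %| #|H|)%N.
Proof.
(* With X = A :&: B H:  AH :&: BH = XH,  |XH : (A :&: B)H|  divides
   |X : A :&: B| = |BX : B|, which divides |BH : B|. *)
have cH (K : {group gT}) : K \subset A -> H \subset 'C(K).
  by move=> sKA; apply: subset_trans cAH (centS sKA).
set X := (A :&: B <*> H)%G.
have sABX : A :&: B \subset X.
  by rewrite setIS // (subset_trans _ (joing_subl B H)) ?subsetIr.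
have sXA : X \subset A by apply: subsetIl.
have defAHBH : A <*> H :&: B <*> H = X * H.
  by rewrite setIC [A <*> H]cent_joinEr // -group_modr ?joing_subr // setIC.
have defXH : X * H = (A :&: B) <*> H * X.
  rewrite cent_joinEr ?cH ?subsetIl // -mulgA (centC (cH _ sXA)) mulgA.
  by rewrite (mulSGid sABX).
have nBX : X \subset 'N(B).
  apply: subset_trans (subsetIr _ _) _.
  by rewrite /= cent_joinEr // mul_subG ?normG ?cents_norm // centsC.
rewrite /= defAHBH defXH indexMg.
apply: dvdn_trans (indexgS X (joing_subl (A :&: B) H)) _.
have -> : #|X : A :&: B| = #|X : B|.
  by rewrite -[LHS]indexgI -[RHS]indexgI setIA (setIidPl sXA).
rewrite -indexMg -norm_joinEr //.
have sBXBH : B <*> X \subset B <*> H.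
  by rewrite join_subG joing_subl subsetIr.
apply: dvdn_trans (indexSg (joing_subl B X) sBXBH) _.
by rewrite /= cent_joinEr // indexMg dvdn_indexg.
Qed.

End CentralJoin.

Section GaloisCorrespondence.
Local Open Scope group_scope.
Variables (F0 : fieldType) (L : splittingFieldType F0) (E : {subfield L}).

Lemma gal_prodv (K1 K2 : {subfield L}) : (K1 <= E)%VS -> (K2 <= E)%VS ->
  'Gal(E / K1 * K2) = ('Gal(E / K1) :&: 'Gal(E / K2))%g.
Proof.
move=> sK1E sK2E; have sK12E : (K1 * K2 <= E)%VS by apply: prodv_sub.
apply/setP => x; rewrite inE -!sub1set !galois_connection //.
apply/idP/andP => [sK12 | [sK1 sK2]]; last exact: prodv_sub.
by split; apply: subv_trans sK12; rewrite ?field_subvMr ?field_subvMl.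
Qed.

Lemma gal_capv (K1 K2 : {subfield L}) : galois K1 E -> galois K2 E ->
  'Gal(E / K1 :&: K2) = ('Gal(E / K1) <*> 'Gal(E / K2))%g.
Proof.
move=> galK1 galK2; apply/eqP.
rewrite eqEsubset join_subG !galS ?capvSl ?capvSr //=.
set J := ('Gal(E / K1) <*> 'Gal(E / K2))%G.
rewrite -(gal_fixedField J) galS // subv_cap.
rewrite -[X in (_ <= X)%VS && _](galois_fixedField galK1).
rewrite -[X in _ && (_ <= X)%VS](galois_fixedField galK2).
by rewrite !fixedFieldS ?joing_subl ?joing_subr.
Qed.

Lemma dim_galois_index (M K : {subfield L}) : galois M E -> (M <= K <= E)%VS ->
  \dim_M K = #|'Gal(E / M) : 'Gal(E / K)|%g.
Proof.
move=> galM sMKE; have galK := galoisS sMKE galM.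
rewrite -{1}(galois_fixedField galK) dim_fixed_galois // galS //.
by case/andP: sMKE.
Qed.

End GaloisCorrespondence.

Section CarlitzPolynomial.
Local Open Scope ring_scope.
Variable F : finFieldType.

Lemma natr_card_eq0 (R : finNzRingType) : (#|R|%:R : R) = 0.
Proof. by rewrite -zmodXgE -cardsT expg_cardG ?inE. Qed.

Lemma kofF1 : kofF (1 : F) = 1.
Proof. by rewrite /kofF /kofpoly polyC1 rmorph1. Qed.

Lemma kofFM : {morph @kofF F : a b / a * b}.
Proof. by move=> a b; rewrite /kofF /kofpoly polyCM rmorphM. Qed.

Lemma kfield_natr_card : (#|F|%:R : kfield F) = 0.
Proof.
have := congr1 (@kofF F) (natr_card_eq0 F).
by rewrite /kofF /kofpoly !rmorph_nat !rmorph0.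
Qed.

Lemma deriv_carlitzT : (carlitzT F)^`() = (kT F)%:P.
Proof.
rewrite /carlitzT derivD mul_polyC derivZ derivX derivXn -mulr_natr.
by rewrite -polyC_natr kfield_natr_card mulr0 addr0 alg_polyC.
Qed.

Lemma deriv_carlitz_pow i : (carlitz_pow F i)^`() = (kT F ^+ i)%:P.
Proof.
elim: i => [|i IHi]; first by rewrite derivX expr0.
rewrite /carlitz_pow iterS -/(carlitz_pow F i) deriv_comp deriv_carlitzT IHi.
by rewrite comp_polyC -polyCM exprS.
Qed.

Lemma deriv_carlitz (N : {poly F}) : (carlitz N)^`() = (kofpoly N)%:P.
Proof.
rewrite /carlitz raddf_sum -[in RHS](coefK N) poly_def /kofpoly !rmorph_sum /=.
apply: eq_bigr => i _; rewrite derivZ deriv_carlitz_pow -mul_polyC -polyCM.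
by rewrite -mul_polyC [in RHS]rmorphM [in RHS]rmorphXn.
Qed.

End CarlitzPolynomial.

Section CarlitzGalois.
Local Open Scope ring_scope.
Variables (F : finFieldType) (N : {poly F}) (E : splittingFieldType (kfield F)).
Hypothesis cycE : is_cyclotomic_field N E.

Local Notation CN := (map_poly (in_alg E) (carlitz N)).
Local Notation gal := (gal_of (fullv : {vspace E})).

Lemma carlitz_polyOver1 : CN \is a polyOver 1%VS.
Proof. by apply/polyOver1P; exists (carlitz N). Qed.

Lemma galois_cyclotomic : N != 0 -> galois 1 (fullv : {vspace E}).
Proof.
move=> N_neq0; apply/splitting_galoisField; exists CN.
split; [exact: carlitz_polyOver1 | | exact: cycE].
rewrite separable_map unlock deriv_carlitz.
rewrite (eqp_coprimepr _ (_ : _ %= 1)) ?coprimep1 // polyC_eqp1.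
by rewrite /kofpoly tofrac_eq0.
Qed.

Lemma root_carlitz_gal (g : gal) x : root CN x -> root CN (g x).
Proof. exact: kHom_root_id (sub1v _) (k1AHom _ _) carlitz_polyOver1 (memvf x).
Qed.

Lemma gal_eq_on_carlitz_roots (g h : gal) :
  {in root CN, g =1 h} -> g = h.
Proof.
move=> eq_gh; have [rs CN_rs defE] := cycE.
have rsCN r : r \in rs -> root CN r by rewrite (eqp_root CN_rs) root_prod_XsubC.
have fix_rs : (<<1 & rs>> <= fixedField [set (g * h^-1)%g])%VS.
  apply/Fadjoin_seqP; split=> [|r /rsCN CNr]; first exact: sub1v.
  apply/fixedFieldP=> [|w /set1P->]; first exact: memvf.
  by rewrite galM ?memvf // eq_gh // -galM ?memvf // mulgV gal_id.
rewrite defE in fix_rs; apply/eqP/gal_eqP => a _.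
have /mem_fixedFieldP[_ fixa] := subvP fix_rs a (memvf a).
by rewrite -[g](mulgKV h) galM ?memvf // fixa ?set11.
Qed.

Definition acts_as_scalar (a : F) (g : gal) :=
  forall x, root CN x -> g x = (kofF a)%:A * x.

Lemma constant_subgroupP g :
  reflect (exists2 a, a != 0 & acts_as_scalar a g)
          (g \in constant_subgroup N E).
Proof. by rewrite inE; apply: (iffP (asboolP _)) => [[a []] | [a]]; exists a.
Qed.

Lemma acts_as_scalar1 : acts_as_scalar 1 1%g.
Proof. by move=> x _; rewrite gal_id kofF1 scale1r mul1r. Qed.

Lemma acts_as_scalarM a b g h :
  acts_as_scalar a g -> acts_as_scalar b h -> acts_as_scalar (a * b) (g * h)%g.
Proof.
move=> ag bh x CNx; rewrite galM ?memvf // ag // mulr_algl linearZ /= bh //.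
by rewrite !mulr_algl scalerA kofFM.
Qed.

Lemma acts_as_scalar_cent a g h : acts_as_scalar a g -> commute g h.
Proof.
move=> ag; apply: gal_eq_on_carlitz_roots => x CNx.
rewrite !galM ?memvf // (ag x) // (ag (h x)) ?root_carlitz_gal //.
by rewrite !mulr_algl linearZ.
Qed.

Lemma constant_subgroup_central :
  (<<constant_subgroup N E>> \subset 'C([set: gal]))%g.
Proof.
rewrite gen_subG; apply/subsetP => g /constant_subgroupP[a _ ag].
by apply/centP => h _; apply: acts_as_scalar_cent ag.
Qed.

Definition scalar_units : {set {unit F}} :=
  [set u | [exists g : gal, `[< acts_as_scalar (val u) g >]]].

Definition scalar_gal (u : {unit F}) : gal :=
  odflt 1%g [pick g : gal | `[< acts_as_scalar (val u) g >]].

Lemma scalar_galP u :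
  u \in scalar_units -> acts_as_scalar (val u) (scalar_gal u).
Proof.
rewrite inE /scalar_gal => /existsP[g ag].
by case: pickP => [h /asboolP // | /(_ g)]; rewrite ag.
Qed.

Lemma scalar_units_group_set : group_set scalar_units.
Proof.
apply/group_setP; split=> [|u v /scalar_galP ug /scalar_galP vg].
  by rewrite inE; apply/existsP; exists 1%g; apply/asboolP/acts_as_scalar1.
rewrite inE; apply/existsP; exists (scalar_gal u * scalar_gal v)%g.
exact/asboolP/acts_as_scalarM.
Qed.

Canonical scalar_units_group := Group scalar_units_group_set.

Lemma scalar_gal_morphM :
  {in scalar_units &, {morph scalar_gal : u v / u * v}}%g.
Proof.
move=> u v Su Sv; have ug := scalar_galP Su; have vg := scalar_galP Sv.
have uvg := scalar_galP (groupM Su Sv).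
apply: gal_eq_on_carlitz_roots => x CNx.
by rewrite uvg // (acts_as_scalarM ug vg).
Qed.

Canonical scalar_gal_morphism := Morphism scalar_gal_morphM.

Lemma constant_subgroup_sub_morphim :
  (constant_subgroup N E \subset scalar_gal @* scalar_units)%g.
Proof.
apply/subsetP => g /constant_subgroupP[a a_neq0 ag].
pose u : {unit F} := Sub a (etrans (unitfE a) a_neq0).
have Su : u \in scalar_units.
  by rewrite inE; apply/existsP; exists g; apply/asboolP.
have -> : g = scalar_gal u.
  by apply: gal_eq_on_carlitz_roots => x CNx; rewrite ag // (scalar_galP Su).
exact: mem_morphim.
Qed.

Lemma card_constant_subgroup_dvd :
  (#|<<constant_subgroup N E>>%g| %| #|F|.-1)%N.
Proof.
rewrite -card_finField_unit.
have sSim : (<<constant_subgroup N E>> \subset scalar_gal @* scalar_units)%g.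
  by rewrite gen_subG constant_subgroup_sub_morphim.
apply: dvdn_trans (cardSg sSim) _.
exact: dvdn_trans (dvdn_morphim _ _) (cardSg (subsetT _)).
Qed.

End CarlitzGalois.

Theorem proposition5p1 (F : finFieldType) (N : {poly F}) (N_neq0 : N != 0%R)
    (E : splittingFieldType (kfield F)) (hE : is_cyclotomic_field N E)
    (L1 L2 : {subfield E}) :
  let Ep := real_subfield N E in
  let L := (L1 * L2)%AS in
  let Lp := (L :&: Ep)%AS in
  let L1p := (L1 :&: Ep)%AS in
  let L2p := (L2 :&: Ep)%AS in
  (\dim_(L1p * L2p)%AS Lp %| #|F|.-1)%N.
Proof.
cbv zeta; set Ep := real_subfield N E.
have galK (K : {subfield E}) : galois K fullv.
  by apply: galoisS (galois_cyclotomic hE N_neq0); rewrite sub1v subvf.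
have sL12Lp : ((L1 :&: Ep) * (L2 :&: Ep) <= L1 * L2 :&: Ep)%VS.
  by apply: prodv_sub; apply: capvS; rewrite ?field_subvMr ?field_subvMl.
have galEp : 'Gal(fullv / Ep)%g = <<constant_subgroup N E>>%g.
  exact: gal_generated.
have cS (G : {group gal_of fullv}) :
    (<<constant_subgroup N E>> \subset 'C(G))%g.
  exact: subset_trans (constant_subgroup_central hE) (centS (subsetT G)).
rewrite (dim_galois_index (galK _)) ?sL12Lp ?subvf // !gal_prodv ?subvf //.
rewrite !gal_capv ?galK // galEp gal_prodv ?subvf //.
apply: dvdn_trans (indexg_joinI_central_dvd (cS _) (cS _)) _.
exact: card_constant_subgroup_dvd hE.
Qed.
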